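(* Let $Z\in\{0,1\}$, $S(1),S(0)\in\{0,1\}$ and a covariate vector $\mathbf{X}$ be random variables with $Z\perp\!\!\!\perp\{S(1),S(0),\mathbf{X}\}$ and observed $S=S(Z)$. Assume Monotonicity, $S(1)\ge S(0)$ almost surely. Then $\mathbf{X}\perp\!\!\!\perp U\mid\{Z=1,S=1,e_{1,u}(\mathbf{X})\}$ for $u=s\bar{s}$ and $u=ss$, and $\mathbf{X}\perp\!\!\!\perp U\mid\{Z=0,S=0,e_{0,u}(\mathbf{X})\}$ for $u=s\bar{s}$ and $u=\bar{s}\bar{s}$.
   Context: The principal stratum is $U=(S(1),S(0))$, whose values $(1,1),(1,0),(0,1),(0,0)$ are labelled $ss, s\bar{s}, \bar{s}s, \bar{s}\bar{s}$. Principal scores: $e_u(\mathbf{X}) = \Pr(U=u\mid \mathbf{X})$. Define $e_{1,s\bar{s}}(\mathbf{X}) = e_{s\bar{s}}(\mathbf{X})/\{e_{s\bar{s}}(\mathbf{X})+e_{ss}(\mathbf{X})\}$, $e_{1,ss}(\mathbf{X}) = e_{ss}(\mathbf{X})/\{e_{s\bar{s}}(\mathbf{X})+e_{ss}(\mathbf{X})\}$, $e_{0,s\bar{s}}(\mathbf{X}) = e_{s\bar{s}}(\mathbf{X})/\{e_{s\bar{s}}(\mathbf{X})+e_{\bar{s}\bar{s}}(\mathbf{X})\}$, $e_{0,\bar{s}\bar{s}}(\mathbf{X}) = e_{\bar{s}\bar{s}}(\mathbf{X})/\{e_{s\bar{s}}(\mathbf{X})+e_{\bar{s}\bar{s}}(\mathbf{X})\}$.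 Conditioning events and denominators are assumed positive. *)

From mathcomp Require Import all_boot all_order all_algebra.
From mathcomp Require Import all_classical all_reals all_analysis.
Set Implicit Arguments. Unset Strict Implicit. Unset Printing Implicit Defensive.
Import Order.TTheory GRing.Theory Num.Theory.
Local Open Scope classical_set_scope.
Local Open Scope ring_scope.

(* [e] is a (measurable) version of the conditional probability
   Pr(A | X = x), i.e. Pr(A, X \in B) = E[ e(X) 1{X \in B} ] for all
   measurable B. *)
Definition cond_prob_version d dx (T : measurableType d)
  (Tx : measurableType dx) (R : realType) (P : probability T R)
  (X : T -> Tx) (A : set T) (e : Tx -> R) : Prop :=
  measurable_fun setT e /\
  forall B : set Tx, measurable B ->
    P (A `&` X @^-1` B) = (\int[P]_(t in X @^-1` B) (e (X t))%:E)%E.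

(* Conditional independence of X and the discrete variable U given the
   event A together with the real random variable W:
   for every measurable B and every value u,
     Pr(X \in B, U = u | A, W) = Pr(X \in B | A, W) * Pr(U = u | A, W)  a.s.,
   where the conditional probabilities given (A, sigma(W)) are represented
   (Doob-Dynkin) as measurable [0,1]-valued functions f, g of W.
   (All three identities are stated un-normalised, i.e. multiplied by P(A).) *)
Definition cond_indep_given d dx (T : measurableType d)
  (Tx : measurableType dx) (Tu : Type) (R : realType) (P : probability T R)
  (A : set T) (W : T -> R) (X : T -> Tx) (U : T -> Tu) : Prop :=
  forall (B : set Tx) (u : Tu), measurable B ->
  exists f g : R -> R,
    [/\ measurable_fun setT f, measurable_fun setT g,
        (forall r, 0 <= f r <= 1), (forall r, 0 <= g r <= 1) &
        forall D : set R, measurable D ->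
        [/\ P (A `&` X @^-1` B `&` W @^-1` D)
              = (\int[P]_(t in A `&` W @^-1` D) (f (W t))%:E)%E,
            P (A `&` [set t | U t = u] `&` W @^-1` D)
              = (\int[P]_(t in A `&` W @^-1` D) (g (W t))%:E)%E &
            P (A `&` X @^-1` B `&` [set t | U t = u] `&` W @^-1` D)
              = (\int[P]_(t in A `&` W @^-1` D) (f (W t) * g (W t))%:E)%E]].

From HB Require Import structures.
From mathcomp Require Import all_boot all_order all_algebra.
From mathcomp Require Import all_classical all_reals all_analysis.
From mathcomp Require Import measurable_realfun.
From mathcomp.algebra_tactics Require Import ring.
Import Order.TTheory GRing.Theory Num.Theory.
Local Open Scope classical_set_scope.
Local Open Scope ring_scope.

(* Write the conditioning event as A = {Z = z, U in {u1, u2}}, e.g. u1 = s sbar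
   and u2 = s s for {Z = 1, S = 1}.  Since Z is independent of (U, X), the law
   of X on A has density P(Z = z) (e_u1 + e_u2) with respect to the law of X,
   and the law of X on {A, U = u} has density P(Z = z) e_u.  Hence
   Pr(U = u | A, X) = e_u(X) / (e_u1(X) + e_u2(X)), a function g_u(W) of the
   normalised score W = e_{z,u1}(X) (or of e_{z,u2}(X) = 1 - W).  Whenever
   Pr(U = u | A, X) = g_u(W) with W a function of X, conditioning on W gives
     Pr(X in B, U = u | A, W) = E[1{X in B} g_u(W) | A, W]
                              = Pr(X in B | A, W) g_u(W).
   Conditional probabilities given W are obtained as Radon-Nikodym derivatives
   of the laws of W restricted to events. *)

Section clip01.
Context {R : realType}.
Implicit Types r a b : R.

Definition clip01 r : R := Num.min (Num.max r 0) 1.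

Lemma clip01_itv r : 0 <= clip01 r <= 1.
Proof. by rewrite le_min le_max lexx orbT ler01 ge_min lexx orbT. Qed.

Lemma clip01_id r : 0 <= r <= 1 -> clip01 r = r.
Proof. by case/andP => r0 r1; rewrite /clip01 max_l// min_l. Qed.

Lemma measurable_clip01 : measurable_fun setT clip01.
Proof. by apply: measurable_minr => //; exact: measurable_maxr. Qed.

Lemma clip01_ratio {a b} : 0 <= a -> 0 <= b -> 0 < a + b ->
  clip01 (a / (a + b)) * (a + b) = a /\ clip01 (1 - a / (a + b)) * (a + b) = b.
Proof.
move=> a0 b0 ab0.
have ratio_itv : 0 <= a / (a + b) <= 1.
  by rewrite divr_ge0 ?addr_ge0//= ler_pdivrMr// mul1r lerDl.
have co_ratio_itv : 0 <= 1 - a / (a + b) <= 1.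
  by case/andP: ratio_itv => r0 r1; rewrite subr_ge0 r1 lerBlDr lerDl r0.
by rewrite !clip01_id//; split; field; rewrite gt_eqF.
Qed.

Lemma clip01_co_ratio {a b} : 0 <= a -> 0 <= b -> 0 < a + b ->
  clip01 (b / (a + b)) * (a + b) = b /\ clip01 (1 - b / (a + b)) * (a + b) = a.
Proof. by rewrite [a + b]addrC => a0 b0; exact: clip01_ratio. Qed.

End clip01.

Lemma measurable_inv (R : realType) : measurable_fun setT (@GRing.inv R).
Proof.
have -> : [set: R] = ~` [set 0] `|` [set 0] by rewrite setUC setUv.
apply/measurable_funU => //; first exact: measurableC.
split.
- apply: open_continuous_measurable_fun.
  + by rewrite openC; exact/accessible_closed_set1/hausdorff_accessible.
  + by move=> x /[!inE] /= x0; apply: inv_continuous; exact/eqP.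
- move=> _ Y mY; have [Y0|Y0] := pselect (Y 0^-1).
  + by rewrite (_ : _ `&` _ = [set 0])//; apply/seteqP; split => x /= => [[]|->].
  + by rewrite (_ : _ `&` _ = set0)//; apply/seteqP; split => x //= [-> /Y0].
Qed.

Section ge0_integral_mrestr.
Local Open Scope ereal_scope.

Lemma ge0_integral_mrestr d (T : measurableType d) (R : realType)
    (mu : {measure set T -> \bar R}) (Q E : set T) (mQ : measurable Q)
    (f : T -> \bar R) :
  measurable E -> measurable_fun E f -> (forall x, E x -> 0 <= f x) ->
  \int[mrestr mu mQ]_(x in E) f x = \int[mu]_(x in E `&` Q) f x.
Proof.
move=> mE mf f0.
have EQE : E `&` Q `<=` E by exact: subIsetl.
have mEQ : measurable (E `&` Q) by exact: measurableI.
have mEQc : measurable (E `\` (E `&` Q)) by exact: measurableD.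
rewrite -[in LHS](setDUK EQE) ge0_integral_setU ?setDUK//; last first.
  by rewrite disj_set2E setDIK.
rewrite [X in _ + X]null_set_integral ?adde0//; last 2 first.
- by apply: measurable_funS mf => //; exact: subDsetl.
- rewrite /mrestr -[RHS](measure0 mu); congr (mu _).
  by apply/seteqP; split => [x [[Ex nEQx] Qx]|//]; exact: nEQx.
apply: eq_measure_integral => A mA AEQ.
by rewrite /= /mrestr setIidl// => x /AEQ [].
Qed.
End ge0_integral_mrestr.

Lemma measurable_preimage {d dy} {T : measurableType d}
    {Y : measurableType dy} {V : T -> Y} {F : set Y} :
  measurable_fun setT V -> measurable F -> measurable (V @^-1` F).
Proof. by move=> mV mF; rewrite -[X in measurable X]setTI; exact: mV. Qed.

Definition law_on d dy (T : measurableType d) (Y : measurableType dy)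
    (R : realType) (P : probability T R) (V : T -> Y)
    (mV : measurable_fun setT V) (Q : set T) (mQ : measurable Q) :
  set Y -> \bar R := fun F => P (V @^-1` F `&` Q).
Arguments law_on {d dy T Y R} P {V} mV {Q} mQ.

Section law_on.
Context {d dy : measure_display} {T : measurableType d}
  {Y : measurableType dy} {R : realType} (P : probability T R) {V : T -> Y}
  (mV : measurable_fun setT V) {Q : set T} (mQ : measurable Q).
Local Open Scope ereal_scope.

Local Notation m := (law_on P mV mQ).

Let law_on_pushforward : {measure set Y -> \bar R}.
Proof. exact: (pushforward (mrestr P mQ) V). Defined.

HB.instance Definition _ := isMeasure.Build _ _ _ m
  (measure0 law_on_pushforward) (measure_ge0 law_on_pushforward)
  (@measure_semi_sigma_additive _ _ _ law_on_pushforward).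

Let law_on_fin : fin_num_fun m.
Proof.
move=> F mF; rewrite ge0_fin_numE ?measure_ge0//.
apply: le_lt_trans (probability_le1 P _) (ltry _).
by apply: measurableI => //; exact: measurable_preimage.
Qed.

HB.instance Definition _ := Measure_isFinite.Build _ _ _ m law_on_fin.

Lemma ge0_integral_law_on (D : set Y) (f : Y -> \bar R) :
  measurable D -> measurable_fun D f -> (forall y, D y -> 0 <= f y) ->
  \int[m]_(y in D) f y = \int[P]_(x in V @^-1` D `&` Q) f (V x).
Proof.
move=> mD mf f0.
rewrite (eq_measure_integral law_on_pushforward)//.
rewrite ge0_integral_pushforward//; last by move=> y /[!inE]; exact: f0.
rewrite ge0_integral_mrestr//; first exact: measurable_preimage.
- apply: (measurable_comp mD _ mf); first by move=> _ [x Dx <-].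
  exact: measurable_funS mV.
- by move=> x; exact: f0.
Qed.

Lemma integral_law_on (D : set Y) (f : Y -> \bar R) :
  measurable D -> measurable_fun D f ->
  \int[m]_(y in D) f y = \int[P]_(x in V @^-1` D `&` Q) f (V x).
Proof.
move=> mD mf; rewrite integralE [RHS]integralE.
rewrite ge0_integral_law_on//; last exact: measurable_funepos.
rewrite ge0_integral_law_on//; last exact: measurable_funeneg.
by congr (_ - _); apply: eq_integral => x _; rewrite !unlock.
Qed.

End law_on.

Lemma law_on_dominates d dy (T : measurableType d) (Y : measurableType dy)
    (R : realType) (P : probability T R) (V : T -> Y)
    (mV : measurable_fun setT V) (Q Q' : set T) (mQ : measurable Q)
    (mQ' : measurable Q') :
  Q `<=` Q' -> law_on P mV mQ `<< law_on P mV mQ'.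
Proof.
move=> QQ'; apply/null_content_dominatesP => F mF F0.
apply/eqP; rewrite -measure_le0 -F0; apply: le_measure; rewrite ?inE.
- by apply: measurableI => //; exact: measurable_preimage.
- by apply: measurableI => //; exact: measurable_preimage.
- exact: setIS.
Qed.

Section cond_prob_given.
Context {d dy : measure_display} {T : measurableType d}
  {Y : measurableType dy} {R : realType} (P : probability T R) {W : T -> Y}
  (mW : measurable_fun setT W) {A E : set T} (mA : measurable A)
  (mE : measurable E).
Hypothesis EA : E `<=` A.
Local Open Scope ereal_scope.

Let mAE : measurable (A `\` E) := measurableD mA mE.
Local Notation mu := (law_on P mW mA).
Local Notation nuE := (law_on P mW mE).
Local Notation nuAE := (law_on P mW mAE).
Local Notation dE := (Radon_Nikodym_SigmaFinite.f nuE mu).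
Local Notation dAE := (Radon_Nikodym_SigmaFinite.f nuAE mu).

Let domE : nuE `<< mu. Proof. exact: law_on_dominates. Qed.
Let domAE : nuAE `<< mu.
Proof. by apply: law_on_dominates; exact: subDsetl. Qed.

Let RN_sum_eq1 : ae_eq mu setT (dE \+ dAE) (cst 1).
Proof.
have intE := Radon_Nikodym_SigmaFinite.f_integrable domE.
have intAE := Radon_Nikodym_SigmaFinite.f_integrable domAE.
apply: integral_ae_eq => //; first exact: integrableD.
move=> F _ mF.
have dE_ge0 := Radon_Nikodym_SigmaFinite.f_ge0 domE.
have dAE_ge0 := Radon_Nikodym_SigmaFinite.f_ge0 domAE.
have mdE := measurable_int _ intE.
have mdAE := measurable_int _ intAE.
rewrite ge0_integralD//; [|exact: measurable_funTS..].
rewrite -!Radon_Nikodym_SigmaFinite.f_integral// integral_cst// mul1e /=.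
rewrite /law_on -measureU; last 3 first.
- by apply: measurableI => //; exact: measurable_preimage.
- by apply: measurableI => //; exact: measurable_preimage.
- by rewrite setIACA setDIK setI0.
by rewrite -setIUr setDUK.
Qed.

(* Clipping changes dE only on a null set but makes it [0,1]-valued
   everywhere, as cond_indep_given requires. *)
Let clipped y := Num.min (fine (dE y)) 1%R.

Let measurable_clipped : measurable_fun setT clipped.
Proof.
apply: measurable_minr => //; apply: measurableT_comp => //.
exact: measurable_int (Radon_Nikodym_SigmaFinite.f_integrable domE).
Qed.

Let RN_ae_clipped : ae_eq mu setT dE (EFin \o clipped).
Proof.
apply: filterS RN_sum_eq1 => y /(_ I) /= sum_eq1 _.
have dE_fin := Radon_Nikodym_SigmaFinite.f_fin_num domE y.
have dAE_fin := Radon_Nikodym_SigmaFinite.f_fin_num domAE y.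
have fine_sum : (fine (dE y) + fine (dAE y) = 1)%R.
  by apply: EFin_inj; rewrite EFinD !fineK.
have dE_le1 : (fine (dE y) <= 1)%R.
  by rewrite -fine_sum lerDl fine_ge0// Radon_Nikodym_SigmaFinite.f_ge0.
by rewrite /clipped minEle dE_le1 fineK.
Qed.

Let clipped_itv y : (0 <= clipped y <= 1)%R.
Proof.
have dE_ge0 := Radon_Nikodym_SigmaFinite.f_ge0 domE y.
by rewrite le_min ge_min lexx orbT ler01 andbT (fine_ge0 dE_ge0).
Qed.

Lemma exists_cond_prob_given : exists f : Y -> R,
  [/\ measurable_fun setT f, (forall y, 0 <= f y <= 1)%R &
      forall (D : set Y) (h : Y -> \bar R), measurable D ->
      measurable_fun D h -> (forall y, 0 <= h y) ->
      \int[P]_(t in E `&` W @^-1` D) h (W t)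
      = \int[P]_(t in A `&` W @^-1` D) (h (W t) * (f (W t))%:E)].
Proof.
exists clipped; split; [exact: measurable_clipped|exact: clipped_itv|].
move=> D h mD mh h0.
have mdE := measurable_int _ (Radon_Nikodym_SigmaFinite.f_integrable domE).
rewrite setIC -(ge0_integral_law_on P mW mE)//.
rewrite -(Radon_Nikodym_SigmaFinite.change_of_variables domE)//.
have mhc : measurable_fun D (fun y => h y * (clipped y)%:E).
  by apply: emeasurable_funM => //; exact/measurable_EFinP/measurable_funTS.
transitivity (\int[law_on P mW mA]_(y in D) (h y * (clipped y)%:E)).
  apply: ae_eq_integral => //.
  - by apply: emeasurable_funM => //; exact: measurable_funTS.
  - exact/ae_eqe_mul2l/(ae_eq_subset _ RN_ae_clipped).
rewrite (ge0_integral_law_on P mW mA) 1?setIC; [by []|exact: mD|exact: mhc|].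
by move=> y _; rewrite mule_ge0// lee_fin; case/andP: (clipped_itv y).
Qed.

End cond_prob_given.

Section cond_indep_given_of_cond_prob.
Context {d dx : measure_display} {T : measurableType d}
  {Tx : measurableType dx} {Tu : Type} {R : realType} (P : probability T R)
  {A : set T} (mA : measurable A) {X : T -> Tx} (mX : measurable_fun setT X)
  {w : Tx -> R} (mw : measurable_fun setT w) {U : T -> Tu}.
Local Open Scope ereal_scope.

Lemma cond_indep_given_of_cond_prob (g : Tu -> R -> R) :
  (forall u, measurable_fun setT (g u)) -> (forall u r, (0 <= g u r <= 1)%R) ->
  (forall u B, measurable B ->
     P (A `&` [set t | U t = u] `&` X @^-1` B)
     = \int[P]_(t in A `&` X @^-1` B) (g u (w (X t)))%:E) ->
  cond_indep_given P A (fun t => w (X t)) X U.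
Proof.
move=> mg g01 Ag B u mB.
have mW : measurable_fun setT (fun t => w (X t)) by exact: measurableT_comp.
have mAB : measurable (A `&` X @^-1` B).
  by apply: measurableI => //; exact: measurable_preimage.
have [f [mf f01 ABf]] := exists_cond_prob_given P mW mA mAB (@subIsetl _ A _).
exists f, (g u); split => // D mD; split.
- have := ABf D (cst 1) mD (measurable_cst _) (fun=> lee01).
  rewrite integral_cst ?mul1e; last first.
    by apply: measurableI => //; exact: measurable_preimage.
  by under eq_integral do rewrite mul1e.
- exact: Ag u _ (measurable_preimage mw mD).
- have mBD : measurable (B `&` w @^-1` D).
    by apply: measurableI => //; exact: measurable_preimage.
  transitivity (P (A `&` [set t | U t = u] `&` X @^-1` (B `&` w @^-1` D))).
    by congr (P _); apply/seteqP; split => t /=;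
      [move=> [[[? ?] ?] ?]|move=> [[? ?] [? ?]]]; do !split.
  rewrite Ag//.
  transitivity (\int[P]_(t in A `&` X @^-1` B `&` (fun t => w (X t)) @^-1` D)
                  (g u (w (X t)))%:E).
    by congr (integral _ _ _); apply/seteqP; split => t /=;
      [move=> [? [? ?]]|move=> [[? ?] ?]]; do !split.
  rewrite (ABf D (EFin \o g u))//.
  - by apply: eq_integral => t _; rewrite -EFinM mulrC.
  - exact/measurable_EFinP/measurable_funTS.
  - by move=> r; rewrite lee_fin; case/andP: (g01 u r).
Qed.

End cond_indep_given_of_cond_prob.

Section strata.
Context {d dx : measure_display} {T : measurableType d}
  {Tx : measurableType dx} {R : realType} (P : probability T R)
  {Z S1 S0 : T -> bool} {X : T -> Tx} {e : bool * bool -> Tx -> R}.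
Hypotheses (mZ : forall b, measurable [set t | Z t = b])
  (mS1 : forall b, measurable [set t | S1 t = b])
  (mS0 : forall b, measurable [set t | S0 t = b])
  (mX : measurable_fun setT X)
  (indep : forall (z : bool) (C : set (bool * bool * Tx)), measurable C ->
     P ([set t | Z t = z] `&` ((fun t => (S1 t, S0 t, X t)) @^-1` C))
     = (P [set t | Z t = z] * P ((fun t => (S1 t, S0 t, X t)) @^-1` C))%E)
  (score : forall u, cond_prob_version P X [set t | (S1 t, S0 t) = u] (e u)).
Local Open Scope ereal_scope.

Local Notation U := (fun t => (S1 t, S0 t)).

Lemma measurable_stratum u : measurable [set t | U t = u].
Proof.
rewrite (_ : [set t | U t = u] = [set t | S1 t = u.1] `&` [set t | S0 t = u.2]).
  exact: measurableI.
by apply/seteqP; split => t /=; [move=> <-|case: u => ? ? /= [-> ->]].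
Qed.

Local Notation PX := (law_on P mX measurableT).
Local Notation PXu u := (law_on P mX (measurable_stratum u)).
Local Notation dU u := (Radon_Nikodym_SigmaFinite.f (PXu u) PX).

Lemma indep_stratum z u F : measurable F ->
  P ([set t | Z t = z] `&` [set t | U t = u] `&` X @^-1` F)
  = P [set t | Z t = z] * PXu u F.
Proof.
move=> mF.
have mC : measurable ([set u] `*` F : set (bool * bool * Tx)).
  apply: measurableX => //.
  rewrite (_ : [set u] = [set u.1] `*` [set u.2]); first exact: measurableX.
  by apply/seteqP; split => -[a b] /=; [move=> <-|case: u => ? ? /= [-> ->]].
rewrite /law_on (_ : X @^-1` F `&` _ = (fun t => (U t, X t)) @^-1` ([set u] `*` F)).
  rewrite -indep//; congr (P _).
  by apply/seteqP; split => t /=;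
    [move=> [[? ?] ?]|move=> [? [? ?]]]; do !split.
by apply/seteqP; split => t /= [? ?]; split.
Qed.

Let domU u : PXu u `<< PX.
Proof. exact/law_on_dominates/subsetT. Qed.

Lemma RN_stratum_ae_score u : ae_eq PX setT (dU u) (EFin \o e u).
Proof.
have [me score_u] := score u.
apply: integral_ae_eq => //.
- exact: Radon_Nikodym_SigmaFinite.f_integrable (domU u).
- exact/measurable_EFinP.
move=> F _ mF; rewrite -(Radon_Nikodym_SigmaFinite.f_integral (domU u))//.
rewrite integral_law_on//; last exact/measurable_EFinP/measurable_funTS.
by rewrite setIT /= /law_on setIC score_u.
Qed.

Section two_strata.
Variables (z : bool) (u1 u2 : bool * bool).
Hypothesis u12 : u1 != u2.

Let A := [set t | Z t = z /\ (U t = u1 \/ U t = u2)].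
Let Zu u := [set t | Z t = z] `&` [set t | U t = u].

Let A_split : A = Zu u1 `|` Zu u2.
Proof.
apply/seteqP; split => t /=.
- by move=> [Zt [Ut|Ut]]; [left|right].
- by move=> [[Zt Ut]|[Zt Ut]]; split => //; [left|right].
Qed.

Let mZu u : measurable (Zu u).
Proof. exact/measurableI/measurable_stratum. Qed.

Let mA : measurable A.
Proof. by rewrite A_split; exact: measurableU. Qed.

Local Notation dA := (Radon_Nikodym_SigmaFinite.f (law_on P mX mA) PX).

Let domA : law_on P mX mA `<< PX.
Proof. exact/law_on_dominates/subsetT. Qed.

Lemma RN_two_strata_ae :
  ae_eq PX setT dA (fun x => P [set t | Z t = z] * (dU u1 x + dU u2 x)).
Proof.
have dU_ge0 u := Radon_Nikodym_SigmaFinite.f_ge0 (domU u).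
have mdU u := measurable_int _ (Radon_Nikodym_SigmaFinite.f_integrable (domU u)).
apply: integral_ae_eq => //.
- exact: Radon_Nikodym_SigmaFinite.f_integrable domA.
- by apply: emeasurable_funM => //; exact: (emeasurable_funD (mdU u1) (mdU u2)).
move=> F _ mF.
rewrite -(Radon_Nikodym_SigmaFinite.f_integral domA)//.
rewrite ge0_integralZl//; last 2 first.
- exact: measurable_funTS (emeasurable_funD (mdU u1) (mdU u2)).
- by move=> x _; rewrite adde_ge0 ?dU_ge0.
rewrite ge0_integralD//; last 4 first.
- by move=> x _; exact: dU_ge0.
- exact: measurable_funTS (mdU u1).
- by move=> x _; exact: dU_ge0.
- exact: measurable_funTS (mdU u2).
rewrite -!(Radon_Nikodym_SigmaFinite.f_integral (domU _))//.
rewrite ge0_muleDr ?measure_ge0// -!indep_stratum//.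
have mXF := measurable_preimage mX mF.
rewrite /= /law_on A_split setIUr measureU; last 3 first.
- exact: measurableI.
- exact: measurableI.
- rewrite setIACA setIid; apply/seteqP; split => // t [_ [[_ Ut1] [_ Ut2]]].
  by move: u12; rewrite -Ut1 -Ut2 eqxx.
by rewrite !(setIC (X @^-1` F)).
Qed.

Lemma cond_prob_two_strata (h : Tx -> R) u :
  measurable_fun setT h -> (forall x, 0 <= h x)%R -> u = u1 \/ u = u2 ->
  (forall x, (0 <= e u1 x)%R -> (0 <= e u2 x)%R ->
     (h x * (e u1 x + e u2 x))%R = e u x) ->
  forall B, measurable B ->
  P (A `&` [set t | U t = u] `&` X @^-1` B)
  = \int[P]_(t in A `&` X @^-1` B) (h (X t))%:E.
Proof.
move=> mh h0 u12u hu B mB.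
have dU_ge0 u' := Radon_Nikodym_SigmaFinite.f_ge0 (domU u').
have mdU u' := measurable_int _ (Radon_Nikodym_SigmaFinite.f_integrable (domU u')).
have mdA := measurable_int _ (Radon_Nikodym_SigmaFinite.f_integrable domA).
have AUu : A `&` [set t | U t = u] = Zu u.
  apply/seteqP; split => t /= => [[[Zt _] Ut]|[Zt Ut]]; split => //.
  by split => //; case: u12u => <-; [left|right].
have cfin : P [set t | Z t = z] \is a fin_num := fin_num_measure P _ (mZ z).
rewrite AUu indep_stratum// (Radon_Nikodym_SigmaFinite.f_integral (domU u))//.
rewrite -ge0_integralZl//; last exact: measurable_funTS (mdU u).
transitivity (\int[PX]_(x in B) ((h x)%:E * dA x)).
  apply: ae_eq_integral => //.
  - by apply: emeasurable_funM => //; exact: measurable_funTS (mdU u).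
  - apply: emeasurable_funM; last exact: measurable_funTS mdA.
    exact/measurable_EFinP/measurable_funTS.
  near=> x => Bx.
  have := dU_ge0 u1 x; have := dU_ge0 u2 x.
  rewrite (near RN_two_strata_ae)// (near (RN_stratum_ae_score u))//.
  rewrite (near (RN_stratum_ae_score u1))// (near (RN_stratum_ae_score u2))//=.
  rewrite !lee_fin => e2_ge0 e1_ge0.
  by rewrite -(fineK cfin) -EFinD -!EFinM mulrCA hu.
rewrite (Radon_Nikodym_SigmaFinite.change_of_variables domA)//; last first.
  exact/measurable_EFinP/measurable_funTS.
rewrite (ge0_integral_law_on P mX mA) 1?setIC//.
- exact/measurable_EFinP/measurable_funTS.
- by move=> x _; rewrite lee_fin.
Unshelve. all: by end_near.
Qed.

Lemma cond_indep_given_two_strata {w : Tx -> R} {g1 g2 : R -> R} :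
  measurable_fun setT w -> measurable_fun setT g1 -> measurable_fun setT g2 ->
  (forall r, 0 <= g1 r <= 1)%R -> (forall r, 0 <= g2 r <= 1)%R ->
  (forall x, (0 <= e u1 x)%R -> (0 <= e u2 x)%R ->
     (g1 (w x) * (e u1 x + e u2 x))%R = e u1 x) ->
  (forall x, (0 <= e u1 x)%R -> (0 <= e u2 x)%R ->
     (g2 (w x) * (e u1 x + e u2 x))%R = e u2 x) ->
  cond_indep_given P A (fun t => w (X t)) X U.
Proof.
move=> mw mg1 mg2 g1_itv g2_itv g1w g2w.
pose g u := if u == u1 then g1 else if u == u2 then g2 else cst 0%R.
apply: (cond_indep_given_of_cond_prob P mA mX mw g).
- by move=> u; rewrite /g; case: ifP => _; [|case: ifP].
- move=> u r; rewrite /g; case: ifP => _; first exact: g1_itv.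
  by case: ifP => _; rewrite ?lexx ?ler01.
move=> u B mB; rewrite /g.
have [->|u1u] := eqVneq u u1.
  apply: (cond_prob_two_strata (g1 \o w)) => //; last by left.
  - exact: measurableT_comp.
  - by move=> x; case/andP: (g1_itv (w x)).
have [->|u2u] := eqVneq u u2.
  apply: (cond_prob_two_strata (g2 \o w)) => //; last by right.
  - exact: measurableT_comp.
  - by move=> x; case/andP: (g2_itv (w x)).
rewrite (_ : A `&` _ = set0) ?set0I ?measure0 ?integral0//.
by apply/seteqP; split => // t [[_ [Ut|Ut]] Uu];
  move: u1u u2u; rewrite -Uu Ut eqxx.
Qed.

Lemma cond_indep_given_normalised_score u :
  u = u1 \/ u = u2 -> (forall x, 0 < e u1 x + e u2 x)%R ->
  cond_indep_given P A (fun t => e u (X t) / (e u1 (X t) + e u2 (X t)))%R X U.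
Proof.
move=> u12u pos.
have me u' : measurable_fun setT (e u') by case: (score u').
have mw u' : measurable_fun setT (fun x => e u' x / (e u1 x + e u2 x))%R.
  apply: measurable_funM => //.
  by apply: measurableT_comp; [exact: measurable_inv|exact: measurable_funD].
(* The normalised score is in [0, 1] only where the scores are nonnegative,
   so the version of Pr(U = u | A, X) is its clipped image. *)
have mclipC : measurable_fun setT (fun r : R => clip01 (1 - r))%R.
  by apply: measurableT_comp; [exact: measurable_clip01|exact: measurable_funB].
have clipC_itv (r : R) : (0 <= clip01 (1 - r) <= 1)%R by exact: clip01_itv.
case: u12u => ->.
- apply: cond_indep_given_two_strata (mw u1) measurable_clip01 mclipC
    clip01_itv clipC_itv _ _ => x e1_ge0 e2_ge0.
  + by case: (clip01_ratio e1_ge0 e2_ge0 (pos x)).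
  + by case: (clip01_ratio e1_ge0 e2_ge0 (pos x)).
- apply: cond_indep_given_two_strata (mw u2) mclipC measurable_clip01
    clipC_itv clip01_itv _ _ => x e1_ge0 e2_ge0.
  + by case: (clip01_co_ratio e1_ge0 e2_ge0 (pos x)).
  + by case: (clip01_co_ratio e1_ge0 e2_ge0 (pos x)).
Qed.

End two_strata.

End strata.

Theorem lemmaA6 (d dx : measure_display) (T : measurableType d)
  (Tx : measurableType dx) (R : realType) (P : probability T R)
  (Z S1 S0 : T -> bool) (X : T -> Tx) (e : bool * bool -> Tx -> R) :
  (forall b, measurable [set t | Z t = b]) ->
  (forall b, measurable [set t | S1 t = b]) ->
  (forall b, measurable [set t | S0 t = b]) ->
  measurable_fun setT X ->
  (* Z independent of {S(1), S(0), X} *)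
  (forall (z : bool) (C : set (bool * bool * Tx)), measurable C ->
     P ([set t | Z t = z] `&` ((fun t => (S1 t, S0 t, X t)) @^-1` C))
     = (P [set t | Z t = z] * P ((fun t => (S1 t, S0 t, X t)) @^-1` C))%E) ->
  (* Monotonicity: S(1) >= S(0) almost surely *)
  {ae P, forall t, S0 t ==> S1 t} ->
  (* principal scores *)
  (forall u, cond_prob_version P X [set t | (S1 t, S0 t) = u] (e u)) ->
  (* conditioning events and denominators positive *)
  (0 < P [set t | Z t = true /\ (if Z t then S1 t else S0 t) = true])%E ->
  (0 < P [set t | Z t = false /\ (if Z t then S1 t else S0 t) = false])%E ->
  (forall x, 0 < e (true, false) x + e (true, true) x) ->
  (forall x, 0 < e (true, false) x + e (false, false) x) ->
  let U := fun t => (S1 t, S0 t) in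
  let S := fun t => if Z t then S1 t else S0 t in
  let A1 := [set t | Z t = true /\ S t = true] in
  let A0 := [set t | Z t = false /\ S t = false] in
  let e1 u x := e u x / (e (true, false) x + e (true, true) x) in
  let e0 u x := e u x / (e (true, false) x + e (false, false) x) in
  [/\ cond_indep_given P A1 (fun t => e1 (true, false) (X t)) X U,
      cond_indep_given P A1 (fun t => e1 (true, true) (X t)) X U,
      cond_indep_given P A0 (fun t => e0 (true, false) (X t)) X U &
      cond_indep_given P A0 (fun t => e0 (false, false) (X t)) X U].
Proof.
move=> mZ mS1 mS0 mX indep _ score _ _ pos1 pos0 U S A1 A0 e1 e0.
have -> : A1 =
    [set t | Z t = true /\ (U t = (true, false) \/ U t = (true, true))].
  apply/seteqP; split => t; rewrite /A1 /S /U /= => -[->].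
  - by move=> ->; split => //; case: (S0 t); [right|left].
  - by case=> -[-> _].
have -> : A0 =
    [set t | Z t = false /\ (U t = (true, false) \/ U t = (false, false))].
  apply/seteqP; split => t; rewrite /A0 /S /U /= => -[->].
  - by move=> ->; split => //; case: (S1 t); [left|right].
  - by case=> -[_ ->].
have indep_given :=
  cond_indep_given_normalised_score P mZ mS1 mS0 mX indep score.
split.
- exact: (indep_given true (true, false) (true, true) isT _
    (or_introl erefl) pos1).
- exact: (indep_given true (true, false) (true, true) isT _
    (or_intror erefl) pos1).
- exact: (indep_given false (true, false) (false, false) isT _
    (or_introl erefl) pos0).
- exact: (indep_given false (true, false) (false, false) isT _
    (or_intror erefl) pos0).
Qed.
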